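(* Let $L\ge1$, $d,k,m$ be positive integers with $m>\max\{d,k\}$, $a_0=d$, $a_L=k$, $a_\ell=m$ for $1\le\ell\le L-1$, let $\mathbf W^\ell\in\mathbb R^{a_\ell\times a_{\ell-1}}$ for $\ell=1,\dots,L$, let $\beta\in\mathbb R$, and let $\boldsymbol\Sigma\in\mathbb R^{d\times d}$ be symmetric positive definite. Define $$\widehat{\mathbf G}_O^\beta=\sum_{\ell=1}^L\big(\mathbf W_\beta^{L:\ell+1}\mathbf W_\beta^{\ell+1:L}\big)\otimes\big(\boldsymbol\Sigma^{1/2}\mathbf W_\beta^{1:\ell-1}\mathbf W_\beta^{\ell-1:1}\boldsymbol\Sigma^{1/2}\big).$$ Assume $\alpha_\ell^\beta:=\sigma_{\min}^2(\mathbf W_\beta^{L:\ell+1})\,\sigma_{\min}^2(\mathbf W_\beta^{1:\ell-1})>0$ for all $\ell$, and let $\gamma_\ell^\beta=\alpha_\ell^\beta/\sum_{i=1}^L\alpha_i^\beta$. Then $\widehat{\mathbf G}_O^\beta$ is positive definite and $$\kappa(\widehat{\mathbf G}_O^\beta)\le\kappa(\boldsymbol\Sigma)\sum_{\ell=1}^L\gamma_\ell^\beta\,\kappa^2(\mathbf W_\beta^{L:\ell+1})\,\kappa^2(\mathbf W_\beta^{1:\ell-1})\le\kappa(\boldsymbol\Sigma)\max_{1\le\ell\le L}\kappa^2(\mathbf W_\beta^{L:\ell+1})\,\kappa^2(\mathbf W_\beta^{1:\ell-1}).$$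
   Context: Here $\mathbf I$ denotes the rectangular identity of the appropriate size ($a_\ell\times a_{\ell-1}$, ones on the main diagonal, zeros elsewhere), so $\mathbf W^\ell+\beta\mathbf I$ is the $\ell$-th layer of the linear residual network $F(\mathbf x)=(\mathbf W^L+\beta\mathbf I)\cdots(\mathbf W^1+\beta\mathbf I)\mathbf x$. For $i>j$, $\mathbf W_\beta^{i:j}=(\mathbf W^i+\beta\mathbf I)\cdots(\mathbf W^j+\beta\mathbf I)$; for $i<j$, $\mathbf W_\beta^{i:j}=(\mathbf W^i+\beta\mathbf I)^\top\cdots(\mathbf W^j+\beta\mathbf I)^\top$; empty products are identities ($\mathbf I_k$ for $\ell=L$ in the first factor, $\mathbf I_d$ for $\ell=1$ in the second). $\boldsymbol\Sigma^{1/2}$ is the positive semidefinite square root, $\otimes$ the Kronecker product. For symmetric positive definite $\mathbf A$, $\kappa(\mathbf A)=\lambda_{\max}/\lambda_{\min}$; for rectangular $\mathbf A\in\mathbb R^{p\times q}$, $\sigma_{\min}(\mathbf A)$ is the $\min(p,q)$-th largest singular value and $\kappa(\mathbf A)=\sigma_{\max}(\mathbf A)/\sigma_{\min}(\mathbf A)$. *)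

From HB Require Import structures.
From mathcomp Require Import all_boot all_order all_algebra.
From mathcomp Require Import classical_sets reals.
From mathcomp.real_closed Require Export mxtens.

Set Implicit Arguments.
Unset Strict Implicit.
Unset Printing Implicit Defensive.

Import Order.TTheory GRing.Theory Num.Theory.
Local Open Scope ring_scope.
Local Open Scope classical_set_scope.

Section Defs.
Variable R : realType.

Definition rid (p q : nat) : 'M[R]_(p, q) :=
  \matrix_(i < p, j < q) ((i : nat) == j)%:R.

Definition posdef (n : nat) (A : 'M[R]_n) : Prop :=
  A^T = A /\ forall x : 'cV[R]_n, x != 0 -> 0 < (x^T *m A *m x) 0 0.

Definition psd (n : nat) (A : 'M[R]_n) : Prop :=
  A^T = A /\ forall x : 'cV[R]_n, 0 <= (x^T *m A *m x) 0 0.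

Definition lmax (n : nat) (A : 'M[R]_n) : R := sup [set a : R | eigenvalue A a].
Definition lmin (n : nat) (A : 'M[R]_n) : R := inf [set a : R | eigenvalue A a].

Definition kappa_spd (n : nat) (A : 'M[R]_n) : R := lmax A / lmin A.

Definition psd_sqrt (n : nat) (A : 'M[R]_n) : 'M[R]_n :=
  xget 0 [set S : 'M[R]_n | psd S /\ S *m S = A].

(* Singular values of A in R^{p x q}: square roots of the eigenvalues of the
   min(p,q) x min(p,q) Gram matrix.  sigma_min is the min(p,q)-th largest. *)
Definition sigma_max (p q : nat) (A : 'M[R]_(p, q)) : R :=
  Num.sqrt (lmax (A^T *m A)).
Definition sigma_min (p q : nat) (A : 'M[R]_(p, q)) : R :=
  if (q <= p)%N then Num.sqrt (lmin (A^T *m A)) else Num.sqrt (lmin (A *m A^T)).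
Definition kappa_rect (p q : nat) (A : 'M[R]_(p, q)) : R :=
  sigma_max A / sigma_min A.

Definition width (L d k m l : nat) : nat :=
  if l == 0%N then d else if l == L then k else m.

Section Net.
Variables (a : nat -> nat) (W : forall l : nat, 'M[R]_(a l.+1, a l)) (beta : R).

(* Paper's l-th layer (l >= 1) is  W^l + beta I : 'M_(a_l, a_{l-1});
   here [layer l] is paper's layer l+1. *)
Definition layer (l : nat) : 'M[R]_(a l.+1, a l) := W l + beta *: rid _ _.

(* prodW i j = W_beta^{i:j+1} = (W^i+bI)...(W^{j+1}+bI) for j <= i,
   the empty product (identity of size a_i) when j = i. *)
Fixpoint prodW (i j : nat) : 'M[R]_(a i, a j) :=
  match i with
  | 0 => rid _ _
  | i'.+1 => if (j <= i')%N then layer i' *m prodW i' j else rid _ _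
  end.
End Net.

End Defs.

From HB Require Import structures.
From mathcomp Require Import all_boot all_order all_algebra.
From mathcomp Require Import classical_sets reals.
From mathcomp.real_closed Require Import mxtens complex.
From mathcomp Require Import ring.
Import Order.TTheory GRing.Theory Num.Theory.
Local Open Scope ring_scope.
Set Implicit Arguments.
Unset Strict Implicit.
Unset Printing Implicit Defensive.

(* Each summand of G is a Kronecker product (P P^T) *t (S Q^T Q S) of two
   positive semidefinite matrices, so its Rayleigh quotient lies between the
   products of the extreme eigenvalues of the factors.  Since S Q^T Q S =
   (Q S)^T (Q S) and S S = Sigma, the spectrum of the second factor lies in
   [lmin(Q^T Q) lmin(Sigma), lmax(Q^T Q) lmax(Sigma)], and the extreme
   eigenvalues of the Gram matrices of P and Q are squared singular values.
   Summing over l, the Rayleigh quotient of G lies in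
   [lmin(Sigma) sum_l alpha_l, lmax(Sigma) sum_l smax(P_l)^2 smax(Q_l)^2],
   which gives positive definiteness and the first bound on kappa(G); the
   second bound holds because the gamma_l are convex weights.
   Spectral facts about real symmetric matrices are obtained by passing to
   R[i] and using the unitary diagonalization of Hermitian matrices. *)

Section MatrixFacts.
Variable K : fieldType.

Lemma tens_diag_mx p q (d : 'rV[K]_p) (e : 'rV[K]_q) :
  diag_mx d *t diag_mx e =
  diag_mx (\row_k (d 0 (mxtens_unindex k).1 * e 0 (mxtens_unindex k).2)).
Proof.
apply/matrixP => i j.
case: (mxtens_indexP i) => i1 i2; case: (mxtens_indexP j) => j1 j2.
rewrite tensmxE !mxE mxtens_indexK (inj_eq (can_inj (@mxtens_indexK _ _))) xpair_eqE.
by case: (eqVneq i1 j1) => [->|]; case: (eqVneq i2 j2) => [->|];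
  rewrite ?mulr1n ?mulr0n ?mulr0 ?mul0r.
Qed.

Lemma tensmx11 p q : (1%:M : 'M[K]_p) *t (1%:M : 'M[K]_q) = 1%:M.
Proof.
rewrite -!diag_const_mx tens_diag_mx; congr diag_mx.
by apply/rowP => k; rewrite !mxE mulr1.
Qed.

Lemma eigenvalue_mulmxC p q (M : 'M[K]_(p, q)) (N : 'M[K]_(q, p)) a :
  a != 0 -> eigenvalue (M *m N) a -> eigenvalue (N *m M) a.
Proof.
move=> a_neq0 /eigenvalueP [v vMN v_neq0]; apply/eigenvalueP; exists (v *m M).
  by rewrite mulmxA -(mulmxA v) vMN -scalemxAl.
apply: contra_neq v_neq0 => vM0; have := congr1 (mulmx^~ N) vM0.
by rewrite -mulmxA vMN mul0mx => /eqP; rewrite scaler_eq0 (negbTE a_neq0) => /eqP.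
Qed.

Lemma eigenvalue0 n (A : 'M[K]_n) : eigenvalue A 0 = (\det A == 0).
Proof.
by apply/eigenvalueP/det0P => [[v vA] | [v ? vA]]; exists v; rewrite ?vA ?scale0r.
Qed.

Lemma eigenvalue_mulmxC_sq n (M N : 'M[K]_n) a :
  eigenvalue (M *m N) a -> eigenvalue (N *m M) a.
Proof.
have [->|a_neq0] := eqVneq a 0; last exact: eigenvalue_mulmxC.
by rewrite !eigenvalue0 !det_mulmx mulrC.
Qed.

End MatrixFacts.

Lemma mulmx_conj (K : pzSemiRingType) n (U V D E : 'M[K]_n) :
  U *m V = 1%:M -> V *m D *m U *m (V *m E *m U) = V *m (D *m E) *m U.
Proof. by move=> UV; rewrite -!mulmxA (mulmxA U) UV mul1mx !mulmxA. Qed.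

Lemma wmean_le_bigmax (R : realDomainType) (I : eqType) (r : seq I) (w f : I -> R) :
  {in r, forall i, 0 <= w i} -> \sum_(i <- r) w i = 1 ->
  \sum_(i <- r) w i * f i <= \big[Num.max/0]_(i <- r) f i.
Proof.
move=> w_ge0 w_sum1; rewrite -[X in _ <= X]mul1r -w_sum1 mulr_suml.
rewrite big_seq [X in _ <= X]big_seq; apply: ler_sum => i i_r.
by rewrite ler_wpM2l ?w_ge0 //; apply: le_bigmax_seq.
Qed.

Section QuadraticForms.
Variable R : realType.

Definition qform n (A : 'M[R]_n) (x : 'cV[R]_n) : R := (x^T *m A *m x) 0 0.
Definition sqnorm n (x : 'cV[R]_n) : R := (x^T *m x) 0 0.

Definition rayleigh_in n (A : 'M[R]_n) (lo hi : R) : Prop :=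
  forall x, lo * sqnorm x <= qform A x <= hi * sqnorm x.

Lemma sqnormE n (x : 'cV[R]_n) : sqnorm x = \sum_i x i 0 ^+ 2.
Proof. by rewrite /sqnorm mxE; apply: eq_bigr => i _; rewrite mxE expr2. Qed.

Lemma sqnorm_ge0 n (x : 'cV[R]_n) : 0 <= sqnorm x.
Proof. by rewrite sqnormE sumr_ge0 // => i _; rewrite sqr_ge0. Qed.

Lemma sqnorm_gt0 n (x : 'cV[R]_n) : x != 0 -> 0 < sqnorm x.
Proof.
move=> x_neq0; rewrite lt_def sqnorm_ge0 andbT; apply: contra x_neq0.
rewrite sqnormE psumr_eq0 => [/allP x0|i _]; last exact: sqr_ge0.
apply/eqP/matrixP => i j; rewrite ord1 mxE.
by have := x0 i (mem_index_enum _); rewrite sqrf_eq0 => /eqP.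
Qed.

Lemma qform_sum n (I : Type) (r : seq I) (P : pred I) (F : I -> 'M[R]_n) x :
  qform (\sum_(i <- r | P i) F i) x = \sum_(i <- r | P i) qform (F i) x.
Proof. by rewrite /qform mulmx_sumr mulmx_suml summxE. Qed.

Lemma qform_eigen n (A : 'M[R]_n) (v : 'rV[R]_n) a :
  v *m A = a *: v -> qform A v^T = a * sqnorm v^T.
Proof. by move=> vA; rewrite /qform /sqnorm trmxK vA -scalemxAl mxE. Qed.

Lemma qform_gram p q (M : 'M[R]_(p, q)) x : qform (M *m M^T) x = sqnorm (M^T *m x).
Proof. by rewrite /qform /sqnorm trmx_mul trmxK !mulmxA. Qed.

Lemma qform_sandwich n (S A : 'M[R]_n) x :
  S^T = S -> qform (S *m A *m S) x = qform A (S *m x).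
Proof. by move=> S_sym; rewrite /qform trmx_mul S_sym !mulmxA. Qed.

Lemma trmx_gram p q (M : 'M[R]_(p, q)) : (M *m M^T)^T = M *m M^T.
Proof. by rewrite trmx_mul trmxK. Qed.

Lemma psd_gram p q (M : 'M[R]_(p, q)) : psd (M *m M^T).
Proof. by split=> [|x]; rewrite ?trmx_gram // -/(qform _ x) qform_gram sqnorm_ge0. Qed.

Lemma psd_gramT p q (M : 'M[R]_(p, q)) : psd (M^T *m M).
Proof. by have := psd_gram M^T; rewrite trmxK. Qed.

Lemma posdef_psd n (A : 'M[R]_n) : posdef A -> psd A.
Proof.
case=> A_sym A_pos; split=> // x.
by have [->|/A_pos/ltW//] := eqVneq x 0; rewrite mulmx0 mxE.
Qed.

Lemma eigenvalue_psd_ge0 n (A : 'M[R]_n) a : psd A -> eigenvalue A a -> 0 <= a.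
Proof.
move=> [_ A_psd] /eigenvalueP [v vA v_neq0].
have v_gt0 : 0 < sqnorm v^T by rewrite sqnorm_gt0 // trmx_eq0.
by have := A_psd v^T; rewrite -/(qform _ _) (qform_eigen vA) pmulr_lge0.
Qed.

Lemma eigenvalue_rayleigh_in n (A : 'M[R]_n) lo hi a :
  rayleigh_in A lo hi -> eigenvalue A a -> lo <= a <= hi.
Proof.
move=> A_lohi /eigenvalueP [v vA v_neq0].
have v_gt0 : 0 < sqnorm v^T by rewrite sqnorm_gt0 // trmx_eq0.
by have := A_lohi v^T; rewrite (qform_eigen vA) !ler_pM2r.
Qed.

Lemma rayleigh_inW n (A : 'M[R]_n) lo hi lo' hi' :
  lo' <= lo -> hi <= hi' -> rayleigh_in A lo hi -> rayleigh_in A lo' hi'.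
Proof.
move=> le_lo le_hi A_lohi x; have /andP [lo_x x_hi] := A_lohi x.
by rewrite (le_trans _ lo_x) ?(le_trans x_hi) // ler_wpM2r ?sqnorm_ge0.
Qed.

Lemma rayleigh_in_sum n (I : eqType) (r : seq I) (P : pred I)
    (F : I -> 'M[R]_n) (lo hi : I -> R) :
  {in r, forall i, P i -> rayleigh_in (F i) (lo i) (hi i)} ->
  rayleigh_in (\sum_(i <- r | P i) F i)
    (\sum_(i <- r | P i) lo i) (\sum_(i <- r | P i) hi i).
Proof.
move=> F_lohi x; rewrite qform_sum !mulr_suml !(big_seq_cond (fun i => P i)).
by apply/andP; split; apply: ler_sum => i /andP [/F_lohi F_i /F_i /(_ x) /andP []].
Qed.

Lemma rayleigh_in_sandwich n (S A : 'M[R]_n) lo hi lo' hi' :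
  S^T = S -> 0 <= lo -> 0 <= hi ->
  rayleigh_in A lo hi -> rayleigh_in (S *m S) lo' hi' ->
  rayleigh_in (S *m A *m S) (lo * lo') (hi * hi').
Proof.
move=> S_sym lo_ge0 hi_ge0 A_lohi SS_lohi x.
have SxE : sqnorm (S *m x) = qform (S *m S) x.
  by rewrite /qform /sqnorm trmx_mul S_sym !mulmxA.
have /andP [lo_Sx Sx_hi] := A_lohi (S *m x).
have /andP [lo_x x_hi] := SS_lohi x.
rewrite qform_sandwich // -!mulrA; apply/andP; split.
  by apply: le_trans lo_Sx; rewrite SxE ler_wpM2l.
by apply: le_trans Sx_hi _; rewrite SxE ler_wpM2l.
Qed.

Lemma posdef_rayleigh_in n (A : 'M[R]_n) lo hi :
  A^T = A -> 0 < lo -> rayleigh_in A lo hi -> posdef A.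
Proof.
move=> A_sym lo_gt0 A_lohi; split=> // x x_neq0.
have /andP [lo_x _] := A_lohi x; apply: lt_le_trans lo_x.
by rewrite mulr_gt0 ?sqnorm_gt0.
Qed.

End QuadraticForms.

Section Spectral.
Variable R : realType.
Local Notation toC := (real_complex R).
Local Open Scope sesquilinear_scope.

(* The casts make [*m] use the canonical ring structure of [R[i]] rather than
   the one reached through [numClosedFieldType] by [^t*], so that terms built by
   later rewrites match these syntactically instead of by costly conversion. *)
Definition unitary_diag n (A : 'M[R]_n) (U : 'M[R[i]]_n) (t : 'I_n -> R) : Prop :=
  U *m (U ^t* : 'M[R[i]]_n) = 1%:M /\
  map_mx toC A = (U ^t* : 'M[R[i]]_n) *m diag_mx (\row_i toC (t i)) *m U.

Lemma conj_map_toC p q (M : 'M[R]_(p, q)) : map_mx Num.conj (map_mx toC M) = map_mx toC M.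
Proof. by apply/matrixP => i j; rewrite !mxE conj_Creal ?complex_real. Qed.

Lemma qform_unitary_diag n (A : 'M[R]_n) U t x :
  unitary_diag A U t -> let y := U *m map_mx toC x in
  toC (qform A x) = \sum_i toC (t i) * ((y i 0)^* * y i 0) /\
  toC (sqnorm x) = \sum_i (y i 0)^* * y i 0.
Proof.
move=> [UU AE] y.
have toC_entry p q (M : 'M[R]_(p, q)) i j : toC (M i j) = (map_mx toC M) i j.
  by rewrite mxE.
have yE : (map_mx toC x)^T *m U ^t* = (map_mx Num.conj y)^T.
  rewrite /y map_mxM conj_map_toC trmx_mul; congr (_ *m _).
  by apply/matrixP => i j; rewrite !mxE.
split.
  rewrite toC_entry !map_mxM -map_trmx AE !mulmxA yE -[_ *m U *m _]mulmxA -/y mxE.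
  by apply: eq_bigr => j _; rewrite mul_mx_diag !mxE mulrAC mulrC.
rewrite toC_entry map_mxM -map_trmx -[(map_mx toC x)^T]mulmx1 -(mulmx1C UU).
by rewrite !mulmxA yE -mulmxA -/y mxE; apply: eq_bigr => j _; rewrite !mxE.
Qed.

Lemma rayleigh_in_unitary_diag n (A : 'M[R]_n) U t lo hi :
  unitary_diag A U t -> (forall i, lo <= t i <= hi) -> rayleigh_in A lo hi.
Proof.
move=> AUt t_lohi x; have [qAE sqE] := qform_unitary_diag x AUt.
rewrite -!lecR !rmorphM /= qAE sqE !mulr_sumr.
have y_ge0 i : 0 <= ((U *m map_mx toC x) i 0)^* * (U *m map_mx toC x) i 0.
  by rewrite mulrC mul_conjC_ge0.
by apply/andP; split; apply: ler_sum => i _; rewrite ler_wpM2r // lecR;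
  case/andP: (t_lohi i).
Qed.

Lemma symmx_unitary_diag n (A : 'M[R]_n) : A^T = A ->
  exists U t, unitary_diag A U t /\ forall i, eigenvalue A (t i).
Proof.
move=> A_sym; set Ac := map_mx toC A.
have Ac_herm : Ac \is hermsymmx.
  apply: realsym_hermsym.
    apply/is_hermitianmxP; rewrite expr0 scale1r; apply/matrixP => i j.
    by rewrite !mxE -[in LHS]A_sym mxE.
  by apply/mxOverP => i j; rewrite mxE complex_real.
have /hermitian_normalmx/orthomx_spectralP AcE := Ac_herm.
have U_unitary := spectral_unitarymx Ac.
have D_real := hermitian_spectral_diag_real Ac_herm.
set U := spectralmx Ac in AcE U_unitary; set D := spectral_diag Ac in AcE D_real.
have DE : D = \row_i toC (complex.Re (D 0 i)).
  apply/rowP => i; rewrite mxE; apply/esym/RRe_real.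
  by move/mxOverP: D_real; apply.
rewrite invmx_unitary // DE in AcE.
exists U, (fun i => complex.Re (D 0 i)); split=> [|i].
  by split; first exact/unitarymxP.
rewrite -(eigenvalue_map toC) -/Ac; apply/eigenvalueP; exists (row i U).
  rewrite -row_mul {1}AcE !mulmxA (unitarymxP U_unitary) mul1mx mul_diag_mx.
  by apply/rowP => j; rewrite !mxE.
apply/negP => /eqP row_i0.
have := congr1 (fun M => row i M 0 i) (unitarymxP U_unitary).
by rewrite /= row_mul row_i0 mul0mx !mxE eqxx => /eqP; rewrite eq_sym oner_eq0.
Qed.

Lemma unitary_diag_sym n (A : 'M[R]_n) U t : unitary_diag A U t -> A^T = A.
Proof.
move=> [_ AE]; apply: (map_mx_inj (f := toC)).
rewrite -conj_map_toC -map_trmx AE !trmx_mul !map_mxM trmxCK tr_diag_mx.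
suff -> : map_mx Num.conj (diag_mx (\row_i toC (t i))) = diag_mx (\row_i toC (t i)).
  by rewrite mulmxA.
apply/matrixP => i j; rewrite !mxE rmorphMn.
by congr (_ *+ _); apply: conj_Creal; rewrite complex_real.
Qed.

Lemma unitary_diag_mul n (A B : 'M[R]_n) U s t :
  unitary_diag A U s -> unitary_diag B U t ->
  unitary_diag (A *m B) U (fun i => s i * t i).
Proof.
move=> [UU AE] [_ BE]; split; first exact: UU.
have -> : \row_i toC (s i * t i) =
          \row_j ((\row_i toC (s i)) 0 j * (\row_i toC (t i)) 0 j).
  by apply/rowP => i; rewrite !mxE rmorphM.
by rewrite map_mxM AE BE (mulmx_conj _ _ UU) mulmx_diag.
Qed.

Lemma unitary_diag_eq n (A B : 'M[R]_n) U s t :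
  unitary_diag A U s -> unitary_diag B U t -> (forall i, s i = t i) -> A = B.
Proof.
move=> [_ AE] [_ BE] st; apply: (map_mx_inj (f := toC)).
rewrite AE BE.
by have -> : \row_i toC (s i) = \row_i toC (t i) by apply/rowP => i; rewrite !mxE st.
Qed.

Lemma unitary_diag_horner n (A : 'M[R]_n.+1) U t p :
  unitary_diag A U t -> unitary_diag (horner_mx A p) U (fun i => p.[t i]).
Proof.
move=> [UU AE]; split; first exact: UU.
have [U_unit _] := mulmx1_unit UU.
have Uinv : invmx U = U ^t* by rewrite -[LHS]mulmx1 -UU mulmxA mulVmx ?mul1mx.
have -> : \row_i toC p.[t i] = map_mx (horner (map_poly toC p)) (\row_i toC (t i)).
  by apply/rowP => i; rewrite !mxE horner_map.
rewrite map_horner_mx AE -Uinv.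
by rewrite (horner_mx_uconjC _ (diag_mx (\row_i toC (t i))) U_unit) horner_mx_diag.
Qed.

Lemma psd_unitary_diag n (A : 'M[R]_n) U t :
  unitary_diag A U t -> (forall i, 0 <= t i) -> psd A.
Proof.
move=> AUt t_ge0; split; first exact: unitary_diag_sym AUt.
move=> x; have [qAE _] := qform_unitary_diag x AUt.
rewrite -/(qform A x) -lecR rmorph0 qAE; apply: sumr_ge0 => i _.
by rewrite mulr_ge0 ?ler0c // mulrC mul_conjC_ge0.
Qed.

Lemma sup_max_elt (E : set R) M : E M -> (forall a, E a -> a <= M) -> sup E = M.
Proof.
move=> EM M_ub; apply/le_anti/andP; split; first by apply: ge_sup; [exists M|].
by apply: ub_le_sup EM; exists M.
Qed.

Lemma inf_min_elt (E : set R) m : E m -> (forall a, E a -> m <= a) -> inf E = m.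
Proof.
move=> Em m_lb; apply/le_anti/andP; split; last by apply: lb_le_inf; [exists m|].
by apply: ge_inf Em; exists m.
Qed.

Lemma symmx_spectrum n (A : 'M[R]_n) : (0 < n)%N -> A^T = A ->
  [/\ eigenvalue A (lmin A), eigenvalue A (lmax A) &
      forall a, eigenvalue A a -> lmin A <= a <= lmax A].
Proof.
move=> n_gt0 A_sym; have [U [t [AUt t_eig]]] := symmx_unitary_diag A_sym.
have [imin _ t_min] := @arg_minP _ _ _ (Ordinal n_gt0) xpredT t isT.
have [imax _ t_max] := @arg_maxP _ _ _ (Ordinal n_gt0) xpredT t isT.
have eig_in a : eigenvalue A a -> t imin <= a <= t imax.
  apply: eigenvalue_rayleigh_in; apply: (rayleigh_in_unitary_diag AUt) => i.
  by rewrite t_min //; apply: t_max.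
have -> : lmin A = t imin by apply: inf_min_elt (t_eig imin) _ => a /eig_in /andP [].
have -> : lmax A = t imax by apply: sup_max_elt (t_eig imax) _ => a /eig_in /andP [].
by split.
Qed.

Lemma rayleigh_in_lmin_lmax n (A : 'M[R]_n) : (0 < n)%N -> A^T = A ->
  rayleigh_in A (lmin A) (lmax A).
Proof.
move=> n_gt0 A_sym; have [_ _ eig_in] := symmx_spectrum n_gt0 A_sym.
have [U [t [AUt t_eig]]] := symmx_unitary_diag A_sym.
by apply: (rayleigh_in_unitary_diag AUt) => i; apply: eig_in.
Qed.

Lemma lmin_lmax_rayleigh_in n (A : 'M[R]_n) lo hi : (0 < n)%N -> A^T = A ->
  rayleigh_in A lo hi -> lo <= lmin A /\ lmax A <= hi.
Proof.
move=> n_gt0 A_sym A_lohi; have [eig_min eig_max _] := symmx_spectrum n_gt0 A_sym.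
have /andP [-> _] := eigenvalue_rayleigh_in A_lohi eig_min.
by have /andP [_ ->] := eigenvalue_rayleigh_in A_lohi eig_max.
Qed.

Lemma lmin_psd_ge0 n (A : 'M[R]_n) : (0 < n)%N -> psd A -> 0 <= lmin A.
Proof.
move=> n_gt0 A_psd; have [eig_min _ _] := symmx_spectrum n_gt0 A_psd.1.
exact: eigenvalue_psd_ge0 A_psd eig_min.
Qed.

Lemma lmax_psd_ge0 n (A : 'M[R]_n) : (0 < n)%N -> psd A -> 0 <= lmax A.
Proof.
move=> n_gt0 A_psd; have [_ eig_max _] := symmx_spectrum n_gt0 A_psd.1.
exact: eigenvalue_psd_ge0 A_psd eig_max.
Qed.

Lemma lmin_posdef_gt0 n (A : 'M[R]_n) : (0 < n)%N -> posdef A -> 0 < lmin A.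
Proof.
move=> n_gt0 [A_sym A_pos]; have [eig_min _ _] := symmx_spectrum n_gt0 A_sym.
have /eigenvalueP [v vA v_neq0] := eig_min.
have := A_pos v^T; rewrite trmx_eq0 => /(_ v_neq0).
by rewrite -/(qform A v^T) (qform_eigen vA) pmulr_lgt0 // sqnorm_gt0 ?trmx_eq0.
Qed.

Lemma poly_interpolation (f : R -> R) (s : seq R) :
  exists p : {poly R}, {in s, forall x, p.[x] = f x}.
Proof.
elim: s => [|a s [p p_s]]; first by exists 0.
have [a_s|a_notin_s] := boolP (a \in s).
  by exists p => x; rewrite inE => /predU1P [->|]; apply: p_s.
pose q := \prod_(b <- s) ('X - b%:P).
have q_s : {in s, forall x, q.[x] = 0}.
  move=> x x_s; rewrite horner_prod; apply/eqP; rewrite prodf_seq_eq0.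
  by apply/hasP; exists x => //=; rewrite hornerXsubC subrr.
have q_a : q.[a] != 0.
  rewrite horner_prod prodf_seq_neq0; apply/allP => b b_s.
  by rewrite hornerXsubC subr_eq0; apply: contraNneq a_notin_s => ->.
exists (p + ((f a - p.[a]) / q.[a]) *: q) => x; rewrite inE hornerD hornerZ.
case/predU1P => [->|x_s]; first by rewrite divfK // addrC subrK.
by rewrite (q_s x x_s) mulr0 addr0 p_s.
Qed.

Lemma psd_sqrt_exists n (A : 'M[R]_n) : psd A -> exists S, psd S /\ S *m S = A.
Proof.
case: n A => [|n] A A_psd.
  exists 0; split; last by apply/matrixP => -[].
  by split=> [|x]; rewrite ?trmx0 // mulmx0 mul0mx mxE.
have [U [t [AUt t_eig]]] := symmx_unitary_diag A_psd.1.
(* [p] interpolates the square root on the spectrum, so [p(A)] is a root. *)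
have [p p_t] := poly_interpolation Num.sqrt (codom t).
have p_tE i : p.[t i] = Num.sqrt (t i) by rewrite p_t ?codom_f.
have SUt := unitary_diag_horner p AUt.
exists (horner_mx A p); split.
  by apply: psd_unitary_diag SUt _ => i; rewrite p_tE sqrtr_ge0.
apply: unitary_diag_eq (unitary_diag_mul SUt SUt) AUt _ => i.
by rewrite p_tE -expr2 sqr_sqrtr // (eigenvalue_psd_ge0 A_psd (t_eig i)).
Qed.

Lemma psd_sqrtP n (A : 'M[R]_n) :
  psd A -> psd (psd_sqrt A) /\ psd_sqrt A *m psd_sqrt A = A.
Proof. by move=> A_psd; apply: xgetPex (psd_sqrt_exists A_psd). Qed.

Lemma unitary_diag_tens p q (A : 'M[R]_p) (B : 'M[R]_q) U V s t :
  unitary_diag A U s -> unitary_diag B V t ->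
  unitary_diag (A *t B) (U *t V)
    (fun k => s (mxtens_unindex k).1 * t (mxtens_unindex k).2).
Proof.
move=> [UU AE] [VV BE]; rewrite /unitary_diag trmx_tens map_mxT.
split; first by rewrite tensmx_mul UU VV tensmx11.
set D := (X in _ = _ *m X *m _).
have -> : D = diag_mx (\row_i toC (s i)) *t diag_mx (\row_i toC (t i)).
  by rewrite tens_diag_mx; congr diag_mx; apply/rowP => k; rewrite !mxE rmorphM.
by rewrite map_mxT AE BE !tensmx_mul.
Qed.

Lemma rayleigh_in_tens p q (A : 'M[R]_p) (B : 'M[R]_q) :
  (0 < p)%N -> (0 < q)%N -> psd A -> psd B ->
  rayleigh_in (A *t B) (lmin A * lmin B) (lmax A * lmax B).
Proof.
move=> p_gt0 q_gt0 A_psd B_psd.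
have [_ _ A_spec] := symmx_spectrum p_gt0 A_psd.1.
have [_ _ B_spec] := symmx_spectrum q_gt0 B_psd.1.
have [U [s [AUs s_eig]]] := symmx_unitary_diag A_psd.1.
have [V [t [BVt t_eig]]] := symmx_unitary_diag B_psd.1.
apply: (rayleigh_in_unitary_diag (unitary_diag_tens AUs BVt)) => k.
have /andP [lo_s s_hi] := A_spec _ (s_eig (mxtens_unindex k).1).
have /andP [lo_t t_hi] := B_spec _ (t_eig (mxtens_unindex k).2).
have lminA_ge0 := lmin_psd_ge0 p_gt0 A_psd.
have lminB_ge0 := lmin_psd_ge0 q_gt0 B_psd.
by apply/andP; split; apply: ler_pM => //;
  [exact: le_trans lminA_ge0 lo_s | exact: le_trans lminB_ge0 lo_t].
Qed.

Lemma lmax_gram_le p q (M : 'M[R]_(p, q)) : (0 < p)%N -> (0 < q)%N ->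
  lmax (M *m M^T) <= lmax (M^T *m M).
Proof.
move=> p_gt0 q_gt0; have [_ eig_max _] := symmx_spectrum p_gt0 (trmx_gram M).
have [_ _ MtM_spec] := symmx_spectrum q_gt0 (psd_gramT M).1.
have [le0|gt0] := leP (lmax (M *m M^T)) 0.
  exact: le_trans le0 (lmax_psd_ge0 q_gt0 (psd_gramT M)).
by have /andP [_ ->] := MtM_spec _ (eigenvalue_mulmxC (lt0r_neq0 gt0) eig_max).
Qed.

Lemma lmin_gram_sq n (M : 'M[R]_n) : lmin (M^T *m M) = lmin (M *m M^T).
Proof.
by rewrite /lmin; congr inf; apply/seteqP; split=> a; apply: eigenvalue_mulmxC_sq.
Qed.

Lemma sigma_max_sqr p q (M : 'M[R]_(p, q)) :
  (0 < q)%N -> sigma_max M ^+ 2 = lmax (M^T *m M).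
Proof. by move=> q_gt0; apply: sqr_sqrtr; apply: lmax_psd_ge0 q_gt0 (psd_gramT M). Qed.

Lemma sigma_min_sqr_tall p q (M : 'M[R]_(p, q)) :
  (0 < q <= p)%N -> sigma_min M ^+ 2 = lmin (M^T *m M).
Proof.
case/andP=> q_gt0 qp; rewrite /sigma_min qp sqr_sqrtr //.
exact: lmin_psd_ge0 q_gt0 (psd_gramT M).
Qed.

Lemma sigma_min_sqr_wide p q (M : 'M[R]_(p, q)) :
  (0 < p <= q)%N -> sigma_min M ^+ 2 = lmin (M *m M^T).
Proof.
case/andP=> p_gt0; rewrite leq_eqVlt => /predU1P [pq|pq].
  by subst q; rewrite sigma_min_sqr_tall ?lmin_gram_sq // p_gt0 leqnn.
rewrite /sigma_min leqNgt pq sqr_sqrtr //.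
exact: lmin_psd_ge0 p_gt0 (psd_gram M).
Qed.

Lemma rayleigh_in_gram_tens p a n d (P : 'M[R]_(p, a)) (Q : 'M[R]_(n, d))
    (S : 'M[R]_d) :
  (0 < p <= a)%N -> (0 < d <= n)%N -> S^T = S ->
  rayleigh_in ((P *m P^T) *t (S *m (Q^T *m Q) *m S))
    (sigma_min P ^+ 2 * sigma_min Q ^+ 2 * lmin (S *m S))
    (sigma_max P ^+ 2 * sigma_max Q ^+ 2 * lmax (S *m S)).
Proof.
move=> /[dup] pa /andP [p_gt0 le_pa] /[dup] dn /andP [d_gt0 _] S_sym.
have a_gt0 : (0 < a)%N := leq_trans p_gt0 le_pa.
set N := Q^T *m Q; set B := S *m N *m S.
have N_psd : psd N := psd_gramT Q.
have SS_psd : psd (S *m S) by rewrite -{1}S_sym; apply: psd_gramT.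
have B_psd : psd B.
  have -> : B = (Q *m S)^T *m (Q *m S) by rewrite /B /N trmx_mul S_sym !mulmxA.
  exact: psd_gramT.
have B_lohi : rayleigh_in B (lmin N * lmin (S *m S)) (lmax N * lmax (S *m S)).
  apply: rayleigh_in_sandwich => //.
  - exact: lmin_psd_ge0 d_gt0 N_psd.
  - exact: lmax_psd_ge0 d_gt0 N_psd.
  - exact: rayleigh_in_lmin_lmax d_gt0 N_psd.1.
  - exact: rayleigh_in_lmin_lmax d_gt0 SS_psd.1.
have [lo_B B_hi] := lmin_lmax_rayleigh_in d_gt0 B_psd.1 B_lohi.
apply: rayleigh_inW (rayleigh_in_tens p_gt0 d_gt0 (psd_gram P) B_psd).
  rewrite (sigma_min_sqr_wide P pa) (sigma_min_sqr_tall Q dn) -mulrA.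
  by rewrite ler_wpM2l // (lmin_psd_ge0 p_gt0 (psd_gram P)).
rewrite (sigma_max_sqr P a_gt0) (sigma_max_sqr Q d_gt0) -mulrA.
apply: ler_pM => //; last exact: lmax_gram_le.
- exact: lmax_psd_ge0 p_gt0 (psd_gram P).
- exact: lmax_psd_ge0 d_gt0 B_psd.
Qed.

Lemma kappa_spd_rayleigh_in n (A : 'M[R]_n) lo hi :
  (0 < n)%N -> A^T = A -> 0 < lo -> rayleigh_in A lo hi -> kappa_spd A <= hi / lo.
Proof.
move=> n_gt0 A_sym lo_gt0 A_lohi.
have [lo_min max_hi] := lmin_lmax_rayleigh_in n_gt0 A_sym A_lohi.
have [eig_min _ A_spec] := symmx_spectrum n_gt0 A_sym.
have /andP [_ lmin_max] := A_spec _ eig_min.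
have lmin_gt0 := lt_le_trans lo_gt0 lo_min.
rewrite /kappa_spd; apply: ler_pM => //.
- exact: le_trans (ltW lmin_gt0) lmin_max.
- by rewrite invr_ge0 ltW.
- by rewrite lef_pV2.
Qed.

Lemma kappa_spd_ge0 n (A : 'M[R]_n) : (0 < n)%N -> posdef A -> 0 <= kappa_spd A.
Proof.
move=> n_gt0 A_pd; rewrite divr_ge0 ?(lmax_psd_ge0 n_gt0 (posdef_psd A_pd)) //.
exact/ltW/lmin_posdef_gt0.
Qed.

End Spectral.

Section Widths.
Variables (L d k m : nat).
Hypotheses (d_gt0 : (0 < d)%N) (k_gt0 : (0 < k)%N) (dk_lt_m : (maxn d k < m)%N).

Lemma width_gt0 l : (0 < width L d k m l)%N.
Proof.
rewrite /width; case: eqP => // _; case: eqP => // _.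
exact: leq_ltn_trans dk_lt_m.
Qed.

Lemma width_L_le l : (0 < l <= L)%N -> (width L d k m L <= width L d k m l)%N.
Proof.
case/andP=> l_gt0 lL; rewrite /width eqxx (gtn_eqF l_gt0).
rewrite (gtn_eqF (leq_trans l_gt0 lL)).
by case: eqP => // _; apply: ltnW; apply: leq_ltn_trans (leq_maxr d k) dk_lt_m.
Qed.

Lemma width_0_le l : (l < L)%N -> (width L d k m 0 <= width L d k m l)%N.
Proof.
move=> lL; rewrite /width eqxx (ltn_eqF lL); case: eqP => // _.
by apply: ltnW; apply: leq_ltn_trans (leq_maxl d k) dk_lt_m.
Qed.

End Widths.

Section GramKronecker.
Variables (R : realType) (L d k m : nat).
Variables (W : forall l : nat, 'M[R]_(width L d k m l.+1, width L d k m l)) (beta : R).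
Variable Sigma : 'M[R]_d.
Hypotheses (d_gt0 : (0 < d)%N) (k_gt0 : (0 < k)%N) (dk_lt_m : (maxn d k < m)%N).
Hypothesis Sigma_pd : posdef Sigma.

Local Notation P l := (prodW W beta L l).
Local Notation Q l := (prodW W beta l.-1 0).
Local Notation S := (psd_sqrt Sigma).
Local Notation G := (\sum_(1 <= l < L.+1)
  ((P l *m (P l)^T) *t (S *m ((Q l)^T *m Q l) *m S))).
Local Notation alpha l := (sigma_min (P l) ^+ 2 * sigma_min (Q l) ^+ 2).
Local Notation smax2 l := (sigma_max (P l) ^+ 2 * sigma_max (Q l) ^+ 2).
Local Notation sum_alpha := (\sum_(1 <= i < L.+1) alpha i).
Local Notation gamma l := (alpha l / sum_alpha).
Local Notation kappa2 l := (kappa_rect (P l) ^+ 2 * kappa_rect (Q l) ^+ 2).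

Let S_sym : S^T = S. Proof. by case: (psd_sqrtP (posdef_psd Sigma_pd)) => -[]. Qed.

Lemma trmx_gram_kronecker : G^T = G.
Proof.
rewrite raddf_sum; apply: eq_bigr => l _.
by rewrite /= trmx_tens trmx_gram !trmx_mul S_sym trmxK mulmxA.
Qed.

Lemma rayleigh_in_gram_kronecker :
  rayleigh_in G (sum_alpha * lmin Sigma) (\sum_(1 <= l < L.+1) smax2 l * lmax Sigma).
Proof.
have [_ SS] := psd_sqrtP (posdef_psd Sigma_pd).
rewrite mulr_suml; apply: rayleigh_in_sum => l.
rewrite mem_index_iota ltnS => /andP [l_gt0 lL] _.
rewrite -[in lmin _]SS -[in lmax _]SS; apply: rayleigh_in_gram_tens => //.
  by rewrite width_gt0 // width_L_le ?l_gt0.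
rewrite d_gt0 width_0_le //.
by apply: leq_trans lL; rewrite ltn_predL.
Qed.

Hypothesis alpha_gt0 : forall l, (1 <= l <= L)%N -> 0 < alpha l.
Hypothesis L_gt0 : (1 <= L)%N.

Lemma sum_alpha_gt0 : 0 < sum_alpha.
Proof.
have : \sum_(1 <= l < L.+1) (0 : R) < sum_alpha.
  by apply: ltr_sum_nat => // l /alpha_gt0.
by rewrite big1.
Qed.

Lemma kappa_weighted_sumE :
  (\sum_(1 <= l < L.+1) smax2 l * lmax Sigma) / (sum_alpha * lmin Sigma) =
  kappa_spd Sigma *
    \sum_(1 <= l < L.+1) gamma l * kappa_rect (P l) ^+ 2 * kappa_rect (Q l) ^+ 2.
Proof.
have sum_alpha_neq0 := lt0r_neq0 sum_alpha_gt0.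
have lmin_Sigma_neq0 := lt0r_neq0 (lmin_posdef_gt0 d_gt0 Sigma_pd).
have termE l : (1 <= l < L.+1)%N ->
    gamma l * kappa_rect (P l) ^+ 2 * kappa_rect (Q l) ^+ 2 = smax2 l / sum_alpha.
  move=> /alpha_gt0 alpha_l_gt0; rewrite /kappa_rect.
  have sminP_neq0 : sigma_min (P l) != 0.
    by apply: contraTneq alpha_l_gt0 => ->; rewrite expr0n mul0r ltxx.
  have sminQ_neq0 : sigma_min (Q l) != 0.
    by apply: contraTneq alpha_l_gt0 => ->; rewrite expr0n mulr0 ltxx.
  by field; rewrite sminP_neq0 sminQ_neq0 sum_alpha_neq0.
rewrite (eq_big_nat _ _ termE) -!mulr_suml /kappa_spd.
by field; rewrite sum_alpha_neq0 lmin_Sigma_neq0.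
Qed.

Lemma weighted_kappa_le_max :
  \sum_(1 <= l < L.+1) gamma l * kappa_rect (P l) ^+ 2 * kappa_rect (Q l) ^+ 2
  <= \big[Num.max/0]_(1 <= l < L.+1) kappa2 l.
Proof.
under eq_bigr do rewrite -mulrA.
have sum_gt0 := sum_alpha_gt0.
apply: wmean_le_bigmax => [l|]; last by rewrite -mulr_suml divff ?lt0r_neq0.
by rewrite mem_index_iota => /alpha_gt0 alpha_l_gt0; rewrite divr_ge0 ?ltW.
Qed.

End GramKronecker.

Theorem mainTheorem3 (R : realType) (L d k m : nat)
  (W : forall l : nat, 'M[R]_(width L d k m l.+1, width L d k m l))
  (beta : R) (Sigma : 'M[R]_d) :
  (1 <= L)%N -> (0 < d)%N -> (0 < k)%N -> (maxn d k < m)%N ->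
  posdef Sigma ->
  let P l := prodW W beta L l in
  let Q l := prodW W beta l.-1 0 in
  let S := psd_sqrt Sigma in
  let G := \sum_(1 <= l < L.+1)
             ((P l *m (P l)^T) *t (S *m ((Q l)^T *m Q l) *m S)) in
  let alpha l := sigma_min (P l) ^+ 2 * sigma_min (Q l) ^+ 2 in
  let gamma l := alpha l / \sum_(1 <= i < L.+1) alpha i in
  (forall l, (1 <= l <= L)%N -> 0 < alpha l) ->
  posdef G /\
  kappa_spd G <= kappa_spd Sigma *
     \sum_(1 <= l < L.+1) gamma l * kappa_rect (P l) ^+ 2 * kappa_rect (Q l) ^+ 2 /\
  kappa_spd Sigma *
     \sum_(1 <= l < L.+1) gamma l * kappa_rect (P l) ^+ 2 * kappa_rect (Q l) ^+ 2
  <= kappa_spd Sigma *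
     \big[Num.max/0]_(1 <= l < L.+1) (kappa_rect (P l) ^+ 2 * kappa_rect (Q l) ^+ 2).
Proof.
move=> L_gt0 d_gt0 k_gt0 dk_lt_m Sigma_pd; cbv beta zeta => alpha_gt0.
have G_lohi := rayleigh_in_gram_kronecker W beta d_gt0 k_gt0 dk_lt_m Sigma_pd.
have G_sym := trmx_gram_kronecker W beta Sigma_pd.
have lo_gt0 := mulr_gt0 (sum_alpha_gt0 alpha_gt0 L_gt0) (lmin_posdef_gt0 d_gt0 Sigma_pd).
have GLd_gt0 : (0 < width L d k m L * d)%N by rewrite muln_gt0 width_gt0.
split; first exact: posdef_rayleigh_in G_sym lo_gt0 G_lohi.
split; last by rewrite ler_wpM2l ?kappa_spd_ge0 // weighted_kappa_le_max.
rewrite -(kappa_weighted_sumE d_gt0 Sigma_pd alpha_gt0 L_gt0).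
exact: kappa_spd_rayleigh_in GLd_gt0 G_sym lo_gt0 G_lohi.
Qed.
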